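(* There is a PCR/$\mathbb{Q}$ refutation of $Q_n$ of degree $2$ and monomial-size polynomial in $n$.
   Context: For each $i\in[n]$ and $j\in[2n]$ there is a pair of twin variables $x_{ij},\bar x_{ij}$. Let $\mathrm{ks}_i=\sum_{j\in[2n]}x_{ij}-n$. $Q_n$ is the set of constraints: (I) $\mathrm{ks}_1=1/2$; (II) $\mathrm{ks}_i^2=\mathrm{ks}_{i+1}$ for each $i\in[n-1]$; (III) $\mathrm{ks}_n^2=0$ (each written as polynomial $=0$). A PCR/$\mathbb{Q}$ proof of $p=0$ from $Q$ is a sequence $p_1,\dots,p_\ell=p$ where each $p_i$ is an element of $Q$, a logical axiom $x^2-x$ or $x+\bar x-1$ for a twin pair, a product $xp_j$ of an earlier $p_j$ with a variable $x$, or a combination $ap_j+bp_k$ of earlier lines with $a,b\in\mathbb{Q}$. A refutation is a proof of $1=0$. Its degree is the max degree of the $p_i$, and its monomial-size is the total number of monomials (with multiplicity) over all $p_i$. *)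

From HB Require Import structures.
From mathcomp Require Import all_boot all_order all_algebra.
From mathcomp Require Import mpoly.
Set Implicit Arguments. Unset Strict Implicit. Unset Printing Implicit Defensive.
Import Order.TTheory GRing.Theory Num.Theory.
Local Open Scope ring_scope.

(* Variables: (i, j, b) with i : [n] (0-indexed), j : [2n] (0-indexed);
   b = true is x_{ij}, b = false is its twin \bar x_{ij}. *)
Definition var_t (n : nat) : finType := ('I_n * 'I_(2 * n) * bool)%type.

Definition poly_t (n : nat) := {mpoly rat[#|var_t n|]}.

Definition X (n : nat) (v : var_t n) : poly_t n := 'X_(enum_rank v).

Definition ks (n : nat) (i : 'I_n) : poly_t n :=
  \sum_(j < 2 * n) X ((i, j, true) : var_t n) - (n%:R : rat)%:MP.

(* The constraint set Q_n, each constraint written as polynomial = 0. *)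
Definition inQ (n : nat) (p : poly_t n) : Prop :=
  (exists i : 'I_n, val i = 0%N /\ p = ks i - (1 / 2 : rat)%:MP)
  \/ (exists i i' : 'I_n, val i' = (val i).+1 /\ p = ks i ^+ 2 - ks i')
  \/ (exists i : 'I_n, val i = n.-1 /\ p = ks i ^+ 2).

Definition log_axiom (n : nat) (p : poly_t n) : Prop :=
  (exists v : var_t n, p = X v ^+ 2 - X v)
  \/ (exists (i : 'I_n) (j : 'I_(2 * n)),
        p = X ((i, j, true) : var_t n) + X ((i, j, false) : var_t n) - 1).

Definition line_ok (n : nat) (prev : seq (poly_t n)) (p : poly_t n) : Prop :=
  inQ p \/ log_axiom p
  \/ (exists (j : nat) (v : var_t n), (j < size prev)%N /\ p = X v * nth 0 prev j)
  \/ (exists (j k : nat) (a b : rat), (j < size prev)%N /\ (k < size prev)%N /\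
        p = a *: nth 0 prev j + b *: nth 0 prev k).

Definition pcr_proof (n : nat) (s : seq (poly_t n)) : Prop :=
  forall k : nat, (k < size s)%N -> line_ok (take k s) (nth 0 s k).

(* A refutation: a proof whose last line is 1 (i.e. proves 1 = 0). *)
Definition pcr_refutation (n : nat) (s : seq (poly_t n)) : Prop :=
  pcr_proof s /\ s != [::] /\ last 0 s = 1.

(* Degree of a proof: max total degree of its lines (msize p = 1 + deg p, 0 for p = 0). *)
Definition pcr_degree_le (n : nat) (d : nat) (s : seq (poly_t n)) : Prop :=
  all (fun p : poly_t n => (msize p <= d.+1)%N) s.

Definition monomial_size (n : nat) (s : seq (poly_t n)) : nat :=
  \sum_(p <- s) size (msupp p).

From HB Require Import structures.
From mathcomp Require Import all_boot all_order all_algebra.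
From mathcomp Require Import mpoly.
From mathcomp Require Import ring zify.
Set Implicit Arguments. Unset Strict Implicit. Unset Printing Implicit Defensive.
Import Order.TTheory GRing.Theory Num.Theory.
Local Open Scope ring_scope.

(* Write L_i(c) = ks_i - c.  Starting from the axiom L_1(1/2) we derive
   L_i(c_i) with c_1 = 1/2 and c_{i+1} = c_i^2, never exceeding degree 2:
   - squaring step: ks_i * L = sum_j x_ij * L - n * L is built with 4n + 1
     lines (one product and one addition per variable x_ij), and adding
     c * L gives ks_i^2 - c^2;
   - subtracting the axiom ks_i^2 - ks_{i+1} yields L_{i+1}(c^2).
   At the last level, ks_n^2 - (ks_n^2 - c^2) = c^2 is a nonzero constant;
   scaling it by c^-2 gives 1.  The refutation has (2n + 1)^2 lines, and a
   line of degree at most 2 over N variables has at most (N + 1)^2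
   monomials, which gives the polynomial bound. *)

Section DegreeBounds.
Variables (R : idomainType) (N : nat).
Implicit Types p q : {mpoly R[N]}.

Lemma msize_var (i : 'I_N) : msize ('X_i : {mpoly R[N]}) = 2%N.
Proof. by rewrite msizeX mdeg1. Qed.

Lemma msize_cst (c : R) : (msize (c%:MP : {mpoly R[N]}) <= 1)%N.
Proof. by rewrite msizeC; case: (c != 0). Qed.

Lemma msize_mul_le p q a b :
  (msize p <= a.+1)%N -> (msize q <= b.+1)%N -> (msize (p * q) <= (a + b).+1)%N.
Proof.
have [->|p0] := eqVneq p 0; first by rewrite mul0r msize0.
have [->|q0] := eqVneq q 0; first by rewrite mulr0 msize0.
rewrite msizeM //; lia.
Qed.

Lemma msize_mul_affine p q :
  (msize p <= 2)%N -> (msize q <= 2)%N -> (msize (p * q) <= 3)%N.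
Proof. exact: (@msize_mul_le p q 1 1). Qed.

Lemma msize_sub_le p q d : (msize p <= d)%N -> (msize q <= d)%N -> (msize (p - q) <= d)%N.
Proof. by move=> hp hq; apply: leq_trans (msizeD_le _ _) _; rewrite geq_max msizeN hp. Qed.

Lemma msize_lincomb_le (a b : R) p q d :
  (msize p <= d)%N -> (msize q <= d)%N -> (msize (a *: p + b *: q) <= d)%N.
Proof.
move=> hp hq; apply: leq_trans (msizeD_le _ _) _.
by rewrite geq_max !(leq_trans (msizeZ_le _ _)).
Qed.

End DegreeBounds.

(* Counting monomials: a monomial of degree at most 2 is a sum of at most two
   unit monomials, so a polynomial of degree at most 2 in N variables has at
   most (N + 1)^2 monomials. *)
Section MonomialCount.
Variable N : nat.

Definition unit_mnm (o : option 'I_N) : 'X_{1..N} :=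
  if o is Some i then U_(i)%MM else 0%MM.

Lemma mdeg_le1 (m : 'X_{1..N}) : (mdeg m <= 1)%N -> exists o, m = unit_mnm o.
Proof.
rewrite leq_eqVlt ltnS leqn0 => /orP[/mdeg1P[i /eqP ->]|]; first by exists (Some i).
by rewrite mdeg_eq0 => /eqP ->; exists None.
Qed.

Lemma mnm_unit_factor (m : 'X_{1..N}) :
  mdeg m != 0%N -> exists i, m = (U_(i) + (m - U_(i)))%MM.
Proof.
move=> m0; have [i mi] : exists i, (0 < m i)%N.
  apply/existsP; apply: contraNT m0 => /existsPn m_zero.
  by rewrite mdegE big1 // => j _; move: (m_zero j); rewrite lt0n negbK => /eqP.
exists i; rewrite addmC submK //.
by apply/mnm_lepP => j; rewrite mnm1E; case: eqP => // <-.
Qed.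

Lemma mdeg_le2 (m : 'X_{1..N}) :
  (mdeg m <= 2)%N -> exists o1 o2, m = (unit_mnm o1 + unit_mnm o2)%MM.
Proof.
have [/eqP m0|m0] := eqVneq (mdeg m) 0%N.
  by move: m0; rewrite mdeg_eq0 => /eqP ->; exists None, None; rewrite addm0.
have [i ->] := mnm_unit_factor m0; rewrite mdegD mdeg1 add1n ltnS => /mdeg_le1[o ->].
by exists (Some i), o.
Qed.

Lemma msupp_size_deg2 (R : nzRingType) (p : {mpoly R[N]}) :
  (msize p <= 3)%N -> (size (msupp p) <= N.+1 * N.+1)%N.
Proof.
move=> hp; pose mnms := [seq (unit_mnm o.1 + unit_mnm o.2)%MM
                           | o <- enum {: option 'I_N * option 'I_N}].
have -> : (N.+1 * N.+1)%N = size mnms.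
  by rewrite size_map -cardE card_prod card_option card_ord.
apply: uniq_leq_size; first exact: msupp_uniq.
move=> m /msize_mdeg_lt mp; have [o1 [o2 ->]] := mdeg_le2 (leq_trans mp hp).
by apply/mapP; exists (o1, o2); rewrite ?mem_enum.
Qed.

End MonomialCount.

Lemma monomial_size_le n (s : seq (poly_t n)) : pcr_degree_le 2 s ->
  (monomial_size s <= size s * (#|var_t n|.+1 * #|var_t n|.+1))%N.
Proof.
rewrite /monomial_size; elim: s => [|p s IH] /=; first by rewrite big_nil.
by case/andP=> hp hs; rewrite big_cons (mulSn (size s)) leq_add ?msupp_size_deg2 ?IH.
Qed.

Lemma card_var n : #|var_t n| = (n * (2 * n) * 2)%N.
Proof. by rewrite /var_t !card_prod !card_ord card_bool. Qed.

Section Derivations.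
Variable n : nat.
Local Notation P := (poly_t n).
Implicit Types (s : seq P) (p q r : P).

Definition valid s := pcr_proof s /\ pcr_degree_le 2 s.

Definition extends (k : nat) s s' :=
  [/\ valid s', {subset s <= s'} & (size s' <= size s + k)%N].

Lemma valid_deg2 s p : valid s -> p \in s -> (msize p <= 3)%N.
Proof. by case=> _ /allP; apply. Qed.

Lemma line_ok_mul s q v : q \in s -> line_ok s (X v * q).
Proof.
move=> qs; right; right; left; exists (index q s), v.
by rewrite index_mem nth_index.
Qed.

Lemma line_ok_comb s q r a b : q \in s -> r \in s -> line_ok s (a *: q + b *: r).
Proof.
move=> qs rs; right; right; right; exists (index q s), (index r s), a, b.
by rewrite !index_mem !nth_index.
Qed.

Lemma valid_rcons s p : valid s -> line_ok s p -> (msize p <= 3)%N -> valid (rcons s p).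
Proof.
move=> [pf dg] hp dp; split; last by rewrite /pcr_degree_le all_rcons dp.
move=> k; rewrite size_rcons ltnS leq_eqVlt => /orP[/eqP ->|lt_k].
  by rewrite nth_rcons ltnn eqxx -cats1 take_size_cat.
by rewrite nth_rcons lt_k -cats1 takel_cat ?(ltnW lt_k) //; apply: pf.
Qed.

Lemma extends_refl s : valid s -> extends 0 s s.
Proof. by move=> vs; split; rewrite ?addn0. Qed.

Lemma extends_trans k1 k2 s1 s2 s3 :
  extends k1 s1 s2 -> extends k2 s2 s3 -> extends (k1 + k2) s1 s3.
Proof.
move=> [_ sub12 sz12] [v3 sub23 sz23]; split=> // [x /sub12/sub23 //|].
by rewrite addnA (leq_trans sz23) // leq_add2r.
Qed.

Lemma extends_weaken k k' s s' : (k <= k')%N -> extends k s s' -> extends k' s s'.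
Proof. by move=> kk [v sub sz]; split=> //; rewrite (leq_trans sz) ?leq_add2l. Qed.

Lemma extends_rcons s p :
  valid s -> line_ok s p -> (msize p <= 3)%N -> extends 1 s (rcons s p).
Proof.
move=> vs hp dp; split; first exact: valid_rcons.
  by move=> x xs; rewrite mem_rcons inE xs orbT.
by rewrite size_rcons addn1.
Qed.

Lemma mem_rcons_last s p : p \in rcons s p.
Proof. by rewrite mem_rcons inE eqxx. Qed.

Lemma extends_mul s q v :
  valid s -> q \in s -> (msize q <= 2)%N -> extends 1 s (rcons s (X v * q)).
Proof.
move=> vs qs dq; apply: extends_rcons => //; first exact: line_ok_mul.
by apply: msize_mul_affine => //; rewrite msize_var.
Qed.

Lemma extends_comb s q r a b :
  valid s -> q \in s -> r \in s -> extends 1 s (rcons s (a *: q + b *: r)).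
Proof.
move=> vs qs rs; apply: extends_rcons => //; first exact: line_ok_comb.
by apply: msize_lincomb_le; apply: valid_deg2 vs _.
Qed.

(* Accumulating acc + sum_{j in js} x_{f j} * L from an affine line L costs
   two lines per term: the product x_{f j} * L and the running sum. *)
Lemma extends_sum_mul (I : Type) (f : I -> var_t n) (L : P) (js : seq I) :
  forall s acc, valid s -> L \in s -> acc \in s -> (msize L <= 2)%N ->
  exists s', extends (2 * size js) s s' /\ acc + \sum_(j <- js) X (f j) * L \in s'.
Proof.
elim: js => [|j js IH] s acc vs Ls accs dL.
  by exists s; rewrite big_nil addr0; split; first exact: extends_refl.
have e1 := extends_mul (f j) vs Ls dL; have [v1 sub1 _] := e1.
have e2 := extends_comb 1 1 v1 (sub1 _ accs) (mem_rcons_last s (X (f j) * L)).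
rewrite !scale1r in e2; have [v2 sub2 _] := e2.
have [s' [e3 acc_s']] := IH _ _ v2 (sub2 _ (sub1 _ Ls)) (mem_rcons_last _ _) dL.
exists s'; rewrite big_cons addrA; split => //.
by apply: extends_weaken (extends_trans (extends_trans e1 e2) e3); rewrite /=; lia.
Qed.

Lemma msize_ks (i : 'I_n) : (msize (ks i) <= 2)%N.
Proof.
apply: msize_sub_le; last exact: leq_trans (msize_cst _ _) _.
apply: leq_trans (msize_sum _ _ _) _; apply/bigmax_leqP => j _.
by rewrite msize_var.
Qed.

Lemma size_index_enum_ord (k : nat) : size (index_enum 'I_k) = k.
Proof. by rewrite [index_enum _]unlock -enumT -cardE card_ord. Qed.

(* Squaring step: from ks_i - c derive ks_i^2 - c^2 in 4n + 2 lines, using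
   ks_i * L = sum_j x_ij * L - n * L and ks_i^2 - c^2 = ks_i * L + c * L. *)
Lemma extends_square s (i : 'I_n) (c : rat) : valid s -> ks i - c%:MP \in s ->
  exists s', extends (4 * n + 2) s s' /\ ks i ^+ 2 - (c ^+ 2)%:MP \in s'.
Proof.
set L := ks i - c%:MP => vs Ls.
have dL : (msize L <= 2)%N by apply: msize_sub_le; rewrite ?msize_ks ?(leq_trans (msize_cst _ _)).
set acc := (- (n%:R : rat)) *: L + 0 *: L.
have e1 := extends_comb (- (n%:R : rat)) 0 vs Ls Ls; have [v1 sub1 _] := e1.
have [s2 [e2 Fs2]] := extends_sum_mul (fun j => (i, j, true) : var_t n)
  (index_enum 'I_(2 * n)) v1 (sub1 _ Ls) (mem_rcons_last s acc) dL.
set F := acc + _ in Fs2; have [v2 sub2 _] := e2.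
have e3 := extends_comb 1 c v2 Fs2 (sub2 _ (sub1 _ Ls)).
have -> : ks i ^+ 2 - (c ^+ 2)%:MP = 1 *: F + c *: L.
  rewrite /F /acc /L /ks -mulr_suml -!mul_mpolyC mpolyCN mpolyC1 mpolyC0 expr2 mpolyCM.
  ring.
exists (rcons s2 (1 *: F + c *: L)); split; last exact: mem_rcons_last.
apply: extends_weaken (extends_trans (extends_trans e1 e2) e3).
by rewrite size_index_enum_ord; lia.
Qed.

(* The constants c_k = 2^(-2^k): c_0 = 1/2 and c_{k+1} = c_k^2. *)
Definition level_const (k : nat) : rat := iter k (fun x => x ^+ 2) (1 / 2).

Lemma level_const_neq0 k : level_const k != 0.
Proof. by elim: k => [|k IH] //=; rewrite expf_neq0. Qed.

Lemma derive_level k (hk : (k < n)%N) : exists s,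
  extends (1 + k * (4 * n + 4)) [::] s /\ ks (Ordinal hk) - (level_const k)%:MP \in s.
Proof.
elim: k hk => [|k IH] hk.
  exists [:: ks (Ordinal hk) - (1 / 2 : rat)%:MP]; split; last exact: mem_head.
  apply: (@extends_rcons [::]) => //; first by left; left; exists (Ordinal hk).
  by apply: msize_sub_le; rewrite ?(leq_trans (msize_ks _)) ?(leq_trans (msize_cst _ _)).
have [s [e1 Ls]] := IH (ltnW hk); have [v1 _ _] := e1.
have [s2 [e2 Gs2]] := extends_square v1 Ls; have [v2 _ _] := e2.
set i := Ordinal (ltnW hk) in Gs2; set i' := Ordinal hk.
set H := ks i ^+ 2 - ks i'; set G := ks i ^+ 2 - _ in Gs2.
have e3 : extends 1 s2 (rcons s2 H).
  apply: extends_rcons => //; first by left; right; left; exists i, i'.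
  by apply: msize_sub_le; rewrite ?msize_mul_affine ?msize_ks // (leq_trans (msize_ks _)).
have [v3 sub3 _] := e3.
have e4 := extends_comb 1 (-1) v3 (sub3 _ Gs2) (mem_rcons_last s2 H).
have -> : ks i' - (level_const k.+1)%:MP = 1 *: G + (-1) *: H.
  by rewrite /G /H scale1r scaleN1r /=; ring.
exists (rcons (rcons s2 H) (1 *: G + (-1) *: H)); split; last exact: mem_rcons_last.
by apply: extends_weaken (extends_trans (extends_trans (extends_trans e1 e2) e3) e4); lia.
Qed.

(* The refutation: at the last level, c^-2 * ks_n^2 - c^-2 * (ks_n^2 - c^2) = 1. *)
Lemma short_refutation : (0 < n)%N -> exists s,
  [/\ pcr_refutation s, pcr_degree_le 2 s & (size s <= (2 * n + 1) ^ 2)%N].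
Proof.
move=> n0; have last_lt : (n.-1 < n)%N by rewrite ltn_predL.
have [s [e1 Ls]] := derive_level last_lt; have [v1 _ _] := e1.
have [s2 [e2 Gs2]] := extends_square v1 Ls; have [v2 _ _] := e2.
set i := Ordinal last_lt in Gs2; set c := level_const n.-1 in Gs2.
set K := ks i ^+ 2; set G := K - _ in Gs2.
have e3 : extends 1 s2 (rcons s2 K).
  apply: extends_rcons => //; first by left; right; right; exists i.
  by rewrite msize_mul_affine ?msize_ks.
have [v3 sub3 _] := e3.
have e4 := extends_comb (c ^+ 2)^-1 (- (c ^+ 2)^-1) v3 (mem_rcons_last s2 K) (sub3 _ Gs2).
have one : (c ^+ 2)^-1 *: K + (- (c ^+ 2)^-1) *: G = 1.
  rewrite /G scaleNr -scalerBr (_ : K - (K - _) = (c ^+ 2)%:MP); last by ring.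
  by rewrite -mul_mpolyC -mpolyCM mulVf ?mpolyC1 // expf_neq0 // level_const_neq0.
rewrite one in e4.
have [[pf dg] _ sz] := extends_trans (extends_trans (extends_trans e1 e2) e3) e4.
exists (rcons (rcons s2 K) 1); split => //.
  by split; rewrite ?last_rcons // -size_eq0 size_rcons.
by apply: leq_trans sz _; case: n n0 => // m _; rewrite /=; nia.
Qed.

End Derivations.

Theorem lemma5 :
  exists c k : nat, forall n : nat, (0 < n)%N ->
    exists s : seq (poly_t n),
      pcr_refutation s /\ pcr_degree_le 2 s /\ (monomial_size s <= c * n ^ k)%N.
Proof.
exists 225%N, 6%N => n n0.
have [s [refut deg2 sz]] := short_refutation n0.
exists s; split=> //; split=> //.
apply: leq_trans (monomial_size_le deg2) _; rewrite card_var.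
have lines : ((2 * n + 1) ^ 2 <= 9 * n ^ 2)%N by nia.
have monos : ((n * (2 * n) * 2).+1 * (n * (2 * n) * 2).+1 <= 25 * n ^ 4)%N.
  by nia.
rewrite (_ : 225 * n ^ 6 = 9 * n ^ 2 * (25 * n ^ 4))%N; last by rewrite -[6%N]/(2 + 4)%N expnD; ring.
exact: leq_mul (leq_trans sz lines) monos.
Qed.
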